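(* Let $\mathcal{A}$ be a union-closed family with base set $[n]$ and height $h$, and suppose $|\mathcal{A}|>1$. Then there exists an element of $[n]$ that is contained in at least $\frac{|\mathcal{A}|+h-3}{h-1}$ member sets of $\mathcal{A}$.
   Context: A family of sets $\mathcal{A}$ is union-closed if it is a finite family of distinct finite sets with at least one nonempty member set, and $X,Y\in\mathcal{A}$ implies $X\cup Y\in\mathcal{A}$ (the empty set may be a member). The base set $\bigcup_{A\in\mathcal{A}}A$ is denoted $[n]=\{1,\dots,n\}$. A chain in $\mathcal{A}$ is a subfamily any two distinct members of which are comparable under proper inclusion; the height $h$ of $\mathcal{A}$ is the maximum size of a chain in $\mathcal{A}$. *)

From mathcomp Require Import all_boot all_order all_algebra.
Set Implicit Arguments. Unset Strict Implicit. Unset Printing Implicit Defensive.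

(* Ground set [n] = {1,...,n} is represented by 'I_n = {0,...,n-1}. *)

Definition union_closed (n : nat) (A : {set {set 'I_n}}) : Prop :=
  (exists2 X, X \in A & X != set0) /\
  (forall X Y, X \in A -> Y \in A -> X :|: Y \in A).

Definition has_base_set (n : nat) (A : {set {set 'I_n}}) : Prop :=
  \bigcup_(X in A) X = [set: 'I_n].

Definition is_chain (n : nat) (C : {set {set 'I_n}}) : bool :=
  [forall X in C, forall Y in C, (X != Y) ==> ((X \proper Y) || (Y \proper X))].

Definition height (n : nat) (A : {set {set 'I_n}}) : nat :=
  \max_(C in powerset A | is_chain C) #|C|.

Definition degree (n : nat) (A : {set {set 'I_n}}) (i : 'I_n) : nat :=
  #|[set X in A | i \in X]|.

From mathcomp Require Import all_boot all_order all_algebra.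
From mathcomp Require Import zify lra.
Import GRing.Theory Num.Theory.

(* A union-closed family A has a largest member U. Pick a maximal member M
   among the others and some x in U \ M: a member X not below M must contain
   x, since otherwise X :|: M would be a member strictly above M other than U.
   So deg x = |A| - |A_M|, where A_M is the union-closed family of members
   below M. If this is too small, A_M has at least two members and height at
   most h - 1 (every chain of A_M extends by U), and induction yields y with
   large degree in A_M; y then also lies in U, and the bound for A follows by
   arithmetic. The bound is used in the division-free form
   |A| + k <= k deg + 2 for height at most k + 1, which is weaker for larger k
   and so survives the passage to A_M. *)

Local Open Scope nat_scope.

Lemma degree_bound_step {k e m d D : nat} :
  0 < k -> k.+1 * e + 2 < e + m + k.+1 -> m + k <= k * d + 2 -> d < D ->
  e + m + k.+1 <= k.+1 * D + 2.
Proof.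
move=> k_gt0 small_e le_mkd lt_dD.
have le_ed : e <= d by rewrite -(leq_pmul2l k_gt0); lia.
have : k.+1 * d.+1 <= k.+1 * D by rewrite leq_pmul2l.
lia.
Qed.

Section UnionClosed.
Variable n : nat.
Implicit Types (A B C : {set {set 'I_n}}) (U M X Y : {set 'I_n}).

Lemma chain_le_height A C : C \subset A -> is_chain C -> #|C| <= height A.
Proof.
move=> sCA chC.
apply: (leq_bigmax_cond (P := fun C => (C \in powerset A) && is_chain C)).
by rewrite powersetE sCA.
Qed.

Lemma height_exists_chain A :
  exists C, [/\ C \subset A, is_chain C & #|C| = height A].
Proof.
pose P := [pred C : {set {set 'I_n}} | (C \in powerset A) && is_chain C].
have P_gt0 : 0 < #|P|.
  apply/card_gt0P; exists set0.
  by rewrite inE powersetE sub0set; apply/forall_inP => X; rewrite in_set0.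
have [C /andP [] ] := eq_bigmax_cond (fun C : {set {set 'I_n}} => #|C|) P_gt0.
by rewrite powersetE => sCA chC hC; exists C.
Qed.

Lemma is_chain_setU1 U C :
  is_chain C -> {in C, forall X, X \proper U} -> is_chain (U |: C).
Proof.
move=> chC ltCU; apply/forall_inP => X /setU1P XUC.
apply/forall_inP => Y /setU1P YUC; apply/implyP.
case: XUC YUC => [-> | XC] [-> | YC]; rewrite ?eqxx //.
- by rewrite ltCU ?orbT.
- by rewrite ltCU.
- exact: (implyP (forall_inP (forall_inP chC X XC) Y YC)).
Qed.

Lemma height_lt_top {A B U} : U \in A -> B \subset A ->
  {in B, forall X, X \proper U} -> height B < height A.
Proof.
move=> UA sBA ltBU; have [C [sCB chC <-]] := height_exists_chain B.
have ltCU : {in C, forall X, X \proper U} by move=> X /(subsetP sCB); apply: ltBU.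
have UC : U \notin C by apply/negP => /ltCU; rewrite properxx.
have := chain_le_height A (U |: C); rewrite cardsU1 UC; apply.
  by rewrite subUset sub1set UA (subset_trans sCB).
exact: is_chain_setU1.
Qed.

Lemma degree_add_card_below A M x : {in A, forall X, (x \in X) = ~~ (X \subset M)} ->
  degree A x + #|[set X in A | X \subset M]| = #|A|.
Proof.
move=> xA; rewrite /degree -(cardsID [set X : {set 'I_n} | X \subset M] A) addnC.
by congr (_ + _); apply: eq_card => X; rewrite !inE;
  case: (boolP (X \in A)) => XA; rewrite /= ?andbT ?andbF ?xA.
Qed.

Lemma degree_lt_top {A B U y} : U \in A -> U \notin B -> B \subset A ->
  {in A, forall X, X \subset U} -> 0 < degree B y -> degree B y < degree A y.
Proof.
move=> UA UB sBA leAU /card_gt0P [X]; rewrite inE => /andP [XB yX].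
have yU : y \in U by apply: subsetP yX; apply/leAU/(subsetP sBA).
have : U |: [set X in B | y \in X] \subset [set X in A | y \in X].
  apply/subsetP => Z /setU1P [-> | ]; first by rewrite inE UA yU.
  by rewrite !inE => /andP [/(subsetP sBA) -> ->].
by move/subset_leq_card; rewrite cardsU1 inE (negPf UB).
Qed.

Section UnionClosedFamily.
Variable A : {set {set 'I_n}}.
Hypothesis ucA : {in A &, forall X Y, X :|: Y \in A}.

Lemma union_closed_top :
  0 < #|A| -> exists2 U, U \in A & {in A, forall X, X \subset U}.
Proof.
case/card_gt0P => X0 X0A.
have [U /maxsetP [UA Umax] _] := maxset_exists (P := mem A) X0A.
exists U => // X XA.
by rewrite -(Umax (X :|: U)) ?subsetUl ?subsetUr //; apply: ucA.
Qed.

Lemma union_closed_coatom : 1 < #|A| ->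
  exists U M x, [/\ U \in A, {in A, forall X, X \subset U}, M \in A, M \proper U
                   & {in A, forall X, (x \in X) = ~~ (X \subset M)}].
Proof.
move=> A_gt1; have [U UA leAU] := union_closed_top (ltnW A_gt1).
have [M0 M0A] : exists M0, M0 \in A :\ U.
  by apply/card_gt0P; rewrite (cardsD1 U) UA in A_gt1.
have [M /maxsetP [/setD1P [MU MA] Mmax] _] :=
  maxset_exists (P := fun Y => Y \in A :\ U) M0A.
have ltMU : M \proper U by rewrite properEneq MU leAU.
have [_ [x xU xM]] := properP ltMU.
exists U, M, x; split=> // X XA.
have [XM | XnM] := boolP (X \subset M); first by rewrite (contraNF (subsetP XM x) xM).
have XMU : X :|: M = U.
  apply/eqP/negPn/negP => XMU; move/negP: XnM; apply.
  by rewrite -(Mmax (X :|: M)) ?subsetUl ?subsetUr // in_setD1 XMU ucA.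
by move: xU; rewrite -XMU inE (negPf xM) orbF.
Qed.

Lemma union_closed_height_ge2 : 1 < #|A| -> 2 <= height A.
Proof.
move=> A_gt1; have [U [M [_ [UA _ MA ltMU _]]]] := union_closed_coatom A_gt1.
have chMU : is_chain (U |: [set M]).
  apply: is_chain_setU1 => [|X /set1P -> //].
  by apply/forall_inP => X /set1P ->; apply/forall_inP => Y /set1P ->; rewrite eqxx.
have := chain_le_height A _ _ chMU; rewrite cardsU1 cards1 in_set1 eq_sym.
by rewrite (negPf (proper_neq ltMU)) => ->; rewrite // subUset !sub1set UA MA.
Qed.

Lemma union_closed_below M :
  {in [set X in A | X \subset M] &, forall X Y, X :|: Y \in [set X in A | X \subset M]}.
Proof.
move=> X Y; rewrite !inE => /andP [XA XM] /andP [YA YM].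
by rewrite ucA // subUset XM YM.
Qed.

End UnionClosedFamily.

Lemma union_closed_degree_bound k A :
  {in A &, forall X Y, X :|: Y \in A} -> 1 < #|A| -> height A <= k.+1 ->
  exists x, #|A| + k <= k * degree A x + 2.
Proof.
have [N] := ubnP #|A|; elim: N => // N IH in k A *.
rewrite ltnS => leAN ucA A_gt1 hA.
have [U [M [x [UA leAU MA ltMU xA]]]] := union_closed_coatom _ ucA A_gt1.
set AM := [set X in A | X \subset M].
have degx : degree A x + #|AM| = #|A| := degree_add_card_below A M x xA.
have k_gt0 : 0 < k by rewrite -ltnS (leq_trans _ hA) ?union_closed_height_ge2.
rewrite -degx.
have [|small_x] := leqP (degree A x + #|AM| + k) (k * degree A x + 2).
  by exists x.
have AM_gt1 : 1 < #|AM|.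
  have AM_gt0 : 0 < #|AM| by apply/card_gt0P; exists M; rewrite inE MA subxx.
  nia.
have sAMA : AM \subset A by apply/subsetP => X; rewrite inE => /andP [].
have UAM : U \notin AM by move: ltMU; rewrite inE UA properE => /andP [].
have ltAM : #|AM| < #|A| by apply/proper_card/properP; split=> //; exists U.
have ltAMU : {in AM, forall X, X \proper U}.
  by move=> X; rewrite inE => /andP [_ XM]; apply: sub_proper_trans XM ltMU.
case: k k_gt0 hA small_x => // k _ hA small_x.
have hAM : height AM <= k.+1.
  by rewrite -ltnS (leq_trans _ hA) // (height_lt_top UA sAMA ltAMU).
have ucAM := union_closed_below _ ucA M.
have [y le_y] := IH k AM (leq_trans ltAM leAN) ucAM AM_gt1 hAM.
have k_gt0 : 0 < k by rewrite -ltnS (leq_trans _ hAM) ?union_closed_height_ge2.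
have dy_gt0 : 0 < degree AM y.
  by rewrite lt0n; apply/eqP => dy0; rewrite dy0 in le_y; lia.
exists y; apply: (degree_bound_step k_gt0 small_x le_y).
exact: degree_lt_top UA UAM sAMA leAU dy_gt0.
Qed.

End UnionClosed.

Local Open Scope ring_scope.

Theorem theorem1p2 (n : nat) (A : {set {set 'I_n}}) (h : nat) :
  union_closed A -> has_base_set A -> height A = h -> (1 < #|A|)%N ->
  exists i : 'I_n,
    ((#|A|%:R + h%:R - 3) / (h%:R - 1) : rat) <= (degree A i)%:R.
Proof.
move=> [_ ucA] _ hA A_gt1.
have h_ge2 : (2 <= h)%N by rewrite -hA union_closed_height_ge2.
case: h h_ge2 hA => // k k_gt0 hA.
have [x le_x] := union_closed_degree_bound n k A ucA A_gt1 (eq_leq hA).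
exists x; rewrite ler_pdivrMr -natr1 ?addrK ?ltr0n //.
move: le_x; rewrite -(ler_nat rat) !natrD natrM.
lra.
Qed.
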